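(* Let $m\ge 2$, let $\sigma_0\in\{-1,+1\}$, and let $P$ be a real $(m-1)\times(m-1)$ signed permutation matrix. Define the $m\times m$ matrix $$A=\begin{bmatrix} 0_{1\times(m-1)} & \sigma_0\\ P & 0_{(m-1)\times 1}\end{bmatrix}.$$ If all eigenvalues of $A$ are real, then $A = S + E$ where $S$ is a real symmetric matrix and $E$ is a diagonal matrix each of whose diagonal entries belongs to $\{-1,0,+1\}$.
   Context: A real signed permutation matrix is a square matrix with all entries in $\{-1,0,+1\}$ having exactly one nonzero entry in each row and in each column. *)

(* Real matrices with entries in {-1,0,1} are represented over
   algC (algebraic complex numbers); "real" = Num.real. *)
From HB Require Import structures.
From mathcomp Require Import all_boot all_order all_algebra all_field.
Set Implicit Arguments. Unset Strict Implicit. Unset Printing Implicit Defensive.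
Import Order.TTheory GRing.Theory Num.Theory.
Local Open Scope ring_scope.

Definition sign_entry (x : algC) : Prop := x = -1 \/ x = 0 \/ x = 1.

Definition signed_perm_mx (n : nat) (P : 'M[algC]_n) : Prop :=
  (forall i j, sign_entry (P i j)) /\
  (forall i, #|[set j | P i j != 0]| = 1%N) /\
  (forall j, #|[set i | P i j != 0]| = 1%N).

Definition lemma2_mx (n : nat) (s0 : algC) (P : 'M[algC]_n) : 'M[algC]_(1 + n) :=
  castmx (erefl (1 + n)%N, addnC n 1%N)
    (block_mx (0 : 'M_(1, n)) (s0%:M : 'M_1) P (0 : 'M_(n, 1))).

Definition real_mx (n : nat) (M : 'M[algC]_n) : Prop :=
  forall i j, M i j \is Num.real.

From HB Require Import structures.
From mathcomp Require Import all_boot all_order all_algebra all_field.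
Set Implicit Arguments. Unset Strict Implicit. Unset Printing Implicit Defensive.
Import Order.TTheory GRing.Theory Num.Theory Num.Def.
Local Open Scope ring_scope.
Local Open Scope sesquilinear_scope.

(* The matrix A is real orthogonal, hence normal, so the spectral theorem
   writes it as U^-1 D U with U unitary and the eigenvalues of A on the
   diagonal of D.  If these are real, D is self-adjoint and so is A; being
   real, A is then symmetric, and S = A, E = 0 works. *)

Section NormalMatrix.
Variables (C : numClosedFieldType) (n : nat).

Lemma eigenvalue_diag_similar (U : 'M[C]_n) (d : 'rV[C]_n) i :
  U \in unitmx -> eigenvalue (invmx U *m diag_mx d *m U) (d 0 i).
Proof.
move=> Uunit; apply/eigenvalueP; exists (row i U).
  by rewrite rowE !mulmxA mulmxK // -[_ *m diag_mx d]rowE row_diag_mx scalemxAl.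
rewrite rowE mulmx_free_eq0 ?row_free_unit //.
by apply/eqP => /matrixP/(_ 0 i); rewrite !mxE !eqxx => /eqP; rewrite oner_eq0.
Qed.

Lemma normalmx_real_eigenvalue_hermitian (A : 'M[C]_n) :
  A \is normalmx -> (forall z, eigenvalue A z -> z \is Num.real) -> A ^t* = A.
Proof.
move=> /orthomx_spectralP Adef Areal.
set U := spectralmx A in Adef; set d := spectral_diag A in Adef.
have Uunitary : U \is unitarymx := spectral_unitarymx A.
have dC : d ^ conjC = d.
  apply/rowP => i; rewrite mxE; apply/CrealP/Areal.
  by rewrite Adef; apply: eigenvalue_diag_similar; exact: unitarymx_unit.
rewrite Adef invmx_unitary // !trmx_mul !map_mxM trmxCK tr_diag_mx map_diag_mx dC.
by rewrite mulmxA.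
Qed.

End NormalMatrix.

Section Castmx.
Variable R : pzRingType.

Lemma mulmx_castmx k m (e : k = m) p (A : 'M[R]_(k, p)) (B : 'M[R]_(p, k)) :
  castmx (e, erefl p) A *m castmx (erefl p, e) B = castmx (e, e) (A *m B).
Proof. by case: m / e; rewrite !castmx_id. Qed.

Lemma castmx_scalar_mx k m (e : k = m) (a : R) : castmx (e, e) a%:M = a%:M.
Proof. by case: m / e; rewrite castmx_id. Qed.

End Castmx.

Lemma sign_entry_real x : sign_entry x -> x \is Num.real.
Proof. by case=> [->|[->|->]]; rewrite ?realN ?real0 ?real1. Qed.

Lemma sign_entry_sqr x : sign_entry x -> x != 0 -> x * x = 1.
Proof. by case=> [->|[->|->]]; rewrite ?eqxx // ?mulrNN mulr1. Qed.

Lemma real_mx_conj n (M : 'M[algC]_n) : real_mx M -> M ^ conjC = M.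
Proof. by move=> Mreal; apply/matrixP => i j; rewrite mxE; exact/CrealP. Qed.

Lemma cards1_predP (T : finType) (p : pred T) :
  #|[set x | p x]| = 1%N -> exists x0, forall x, p x = (x == x0).
Proof.
by move/eqP/cards1P => [x0 px0]; exists x0 => x; rewrite -in_set1 -px0 inE.
Qed.

Lemma signed_perm_mx_real n (P : 'M[algC]_n) : signed_perm_mx P -> real_mx P.
Proof. by case=> Psign _ i j; exact: sign_entry_real. Qed.

Lemma signed_perm_mx_orthogonal n (P : 'M[algC]_n) :
  signed_perm_mx P -> P^T *m P = 1%:M.
Proof.
case=> Psign [Prow Pcol]; apply/matrixP => i j; rewrite !mxE.
have [l Pcol_i] := cards1_predP (Pcol i).
rewrite (bigD1 l) ?Pcol_i //= big1 => [|k /negbTE kl]; last first.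
  by rewrite mxE; move: (Pcol_i k); rewrite kl => /negbFE/eqP ->; rewrite mul0r.
have [j0 Prow_l] := cards1_predP (Prow l).
have ij0 : i = j0 by apply/eqP; rewrite -Prow_l Pcol_i.
rewrite mxE addr0; case: eqVneq => [<-|ij]; first by rewrite sign_entry_sqr ?Pcol_i.
have /negbFE/eqP -> : (P l j != 0) = false by rewrite Prow_l -ij0 eq_sym (negbTE ij).
by rewrite mulr0.
Qed.

Lemma lemma2_mx_conj n s0 (P : 'M[algC]_n) :
  s0 \is Num.real -> P ^ conjC = P -> lemma2_mx s0 P ^ conjC = lemma2_mx s0 P.
Proof.
move=> /CrealP s0C PC.
by rewrite /lemma2_mx map_castmx map_block_mx map_scalar_mx /= s0C PC !map_mx0.
Qed.

Lemma lemma2_mx_orthogonal n (s0 : algC) (P : 'M[algC]_n) :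
  s0 * s0 = 1 -> P^T *m P = 1%:M -> (lemma2_mx s0 P)^T *m lemma2_mx s0 P = 1%:M.
Proof.
move=> s0s0 PtP; rewrite /lemma2_mx trmx_cast /= mulmx_castmx tr_block_mx.
rewrite mulmx_block !trmx0 !mul0mx !mulmx0 !add0r !addr0 PtP.
rewrite tr_scalar_mx mul_scalar_mx scale_scalar_mx s0s0 -scalar_mx_block.
exact: castmx_scalar_mx.
Qed.

Theorem lemma2 (n : nat) (hn : (1 <= n)%N) (s0 : algC) (P : 'M[algC]_n)
  (hs0 : s0 = 1 \/ s0 = -1) (hP : signed_perm_mx P)
  (hreal : forall z : algC, eigenvalue (lemma2_mx s0 P) z -> z \is Num.real) :
  exists S E : 'M[algC]_(1 + n),
    [/\ real_mx S, S^T = S, is_diag_mx E,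
        (forall i, sign_entry (E i i)) & lemma2_mx s0 P = S + E].
Proof.
set A := lemma2_mx s0 P.
have s0_real : s0 \is Num.real by case: hs0 => ->; rewrite ?realN real1.
have AC : A ^ conjC = A.
  exact/lemma2_mx_conj/real_mx_conj/signed_perm_mx_real.
have AtA : A^T *m A = 1%:M.
  apply: lemma2_mx_orthogonal; last exact: signed_perm_mx_orthogonal.
  by case: hs0 => ->; rewrite ?mulrNN mulr1.
have A_normal : A \is normalmx.
  by apply/normalmxP; rewrite -map_trmx AC AtA; exact: mulmx1C.
have A_sym : A^T = A.
  by rewrite -{1}AC map_trmx; exact: normalmx_real_eigenvalue_hermitian.
exists A, 0; split => //.
- by move=> i j; apply/CrealP; rewrite -[in RHS]AC mxE.
- exact: mx0_is_diag.
- by move=> i; rewrite mxE; right; left.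
- by rewrite addr0.
Qed.
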